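(* Let $E$ be a Banach space, $Y$ a Banach lattice, $1\le q\le p\le\infty$ and $T:E\to Y$ a bounded linear operator. Then $T$ is positive strongly $(p,q)$-summing if and only if there exists $C>0$ such that for all $n\in\mathbb{N}$ and all $x_1,\dots,x_n\in E$, $$\|(T(x_i))_{i=1}^n\|_{\ell_p^{\pi}(Y)}\le C\|(x_i)_{i=1}^n\|_{q}.$$
   Context: $\|(x_i)_{i=1}^n\|_q=(\sum_i\|x_i\|^q)^{1/q}$ (sup norm if $q=\infty$); $p^{\ast}$ is the conjugate exponent of $p$. For a sequence $(y_i^{\ast})$ in $Y^{\ast}$, $\|(y_i^{\ast})\|_{p^{\ast},\omega}=\sup_{y\in B_{Y}}\|(\langle y_i^{\ast},y\rangle)_i\|_{p^{\ast}}$. For a Banach lattice $Y$, $\ell_{r,|\omega|}(Y^{\ast})$ is the Banach lattice of sequences $(y_n^{\ast})$ in $Y^{\ast}$ with $\|(y_n^{\ast})\|_{r,|\omega|}=\sup_{y\in B_Y\cap Y_+}\|(\langle|y_n^{\ast}|,y\rangle)_n\|_{r}<\infty$. For $1<p\le\infty$, $\ell_p^{\pi}(Y)$ is the space of sequences $(y_n)$ in $Y$ with $\|(y_n)\|_{\ell_p^{\pi}(Y)}=\sup\sum_n\langle y_n^{\ast},|y_n|\rangle<\infty$, the supremum over positive $(y_n^{\ast})$ in the unit ball of $\ell_{p^{\ast},|\omega|}(Y^{\ast})$ (finite sequences padded with zeros); by convention $\ell_1^{\pi}(Y)=\ell_1(Y)$. An operator $T:E\to Y$ is positive strongly $(p,q)$-summing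 if there is $C>0$ such that $\sum_{i=1}^n|\langle T(x_i),y_i^{\ast}\rangle|\le C\|(x_i)_{i=1}^n\|_q\,\|(y_i^{\ast})_{i=1}^n\|_{p^{\ast},\omega}$ for all $n$, all $x_i\in E$ and all positive $y_i^{\ast}\in Y^{\ast}$. *)

From HB Require Import structures.
From mathcomp Require Import all_boot all_order all_algebra.
From mathcomp Require Import all_classical all_reals all_analysis.
Set Implicit Arguments. Unset Strict Implicit. Unset Printing Implicit Defensive.
Import Order.TTheory GRing.Theory Num.Theory.
Import numFieldNormedType.Exports.
Local Open Scope classical_set_scope.
Local Open Scope ring_scope.

Record BanachLattice (R : realType) (Y : completeNormedModType R) := {
  bl_le : Y -> Y -> Prop;
  bl_join : Y -> Y -> Y;
  bl_refl : forall x, bl_le x x;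
  bl_antisym : forall x y, bl_le x y -> bl_le y x -> x = y;
  bl_trans : forall x y z, bl_le x y -> bl_le y z -> bl_le x z;
  bl_add : forall x y z, bl_le x y -> bl_le (x + z) (y + z);
  bl_scale : forall (a : R) x y, 0 <= a -> bl_le x y -> bl_le (a *: x) (a *: y);
  bl_join_ubl : forall x y, bl_le x (bl_join x y);
  bl_join_ubr : forall x y, bl_le y (bl_join x y);
  bl_join_least : forall x y z, bl_le x z -> bl_le y z -> bl_le (bl_join x y) z;
  bl_norm : forall x y, bl_le (bl_join x (- x)) (bl_join y (- y)) -> `|x| <= `|y|
}.

Section Defs.
Variable R : realType.

Definition labs (Y : completeNormedModType R) (L : BanachLattice Y) (y : Y) : Y :=
  bl_join L y (- y).

Definition conj_exp (p : \bar R) : \bar R :=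
  match p with
  | +oo%E => 1%E
  | r%:E => if r == 1 then +oo%E else (r / (r - 1))%:E
  | -oo%E => -oo%E
  end.

Definition lpnorm (r : \bar R) (n : nat) (a : 'I_n -> R) : R :=
  match r with
  | +oo%E => \big[Num.max/0]_(i < n) `|a i|
  | s%:E => powR (\sum_(i < n) powR `|a i| s) (s^-1)
  | -oo%E => 0
  end.

Definition is_dual (X : normedModType R) (f : X -> R) : Prop :=
  (forall (a : R) (x y : X), f (a *: x + y) = a * f x + f y) /\
  exists M : R, forall x, `|f x| <= M * `|x|.

Definition is_bounded_op (E Y : normedModType R) (T : E -> Y) : Prop :=
  (forall (a : R) (x y : E), T (a *: x + y) = a *: T x + T y) /\
  exists M : R, forall x, `|T x| <= M * `|x|.

Definition positive_fun (Y : completeNormedModType R) (L : BanachLattice Y)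
  (f : Y -> R) : Prop := forall y, bl_le L 0 y -> 0 <= f y.

(* modulus |f| of f in the dual lattice Y^*, on the positive cone
   (Riesz-Kantorovich): <|f|, y> = sup { |<f, z>| : |z| <= y }, y >= 0 *)
Definition dual_abs (Y : completeNormedModType R) (L : BanachLattice Y)
  (f : Y -> R) (y : Y) : R :=
  sup [set `|f z| | z in [set z | bl_le L (labs L z) y]].

Definition weak_norm (Y : normedModType R) (r : \bar R) (n : nat)
  (f : 'I_n -> Y -> R) : R :=
  sup [set lpnorm r (fun i => f i y) | y in [set y : Y | `|y| <= 1]].

Definition absweak_norm (Y : completeNormedModType R) (L : BanachLattice Y)
  (r : \bar R) (n : nat) (f : 'I_n -> Y -> R) : R :=
  sup [set lpnorm r (fun i => dual_abs L (f i) y)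
      | y in [set y : Y | `|y| <= 1 /\ bl_le L 0 y]].

(* ||(y_i)_{i<n}||_{l_p^pi(Y)} (finite sequences padded with zeros);
   l_1^pi(Y) = l_1(Y) by convention *)
Definition lpi_norm (Y : completeNormedModType R) (L : BanachLattice Y)
  (p : \bar R) (n : nat) (y : 'I_n -> Y) : R :=
  if p == 1%E then \sum_(i < n) `|y i|
  else sup [set \sum_(i < n) f i (labs L (y i)) |
            f in [set f : 'I_n -> Y -> R |
                  (forall i, is_dual (f i) /\ positive_fun L (f i)) /\
                  absweak_norm L (conj_exp p) f <= 1]].

Definition pos_strongly_summing (E : normedModType R)
  (Y : completeNormedModType R) (L : BanachLattice Y) (p q : \bar R)
  (T : E -> Y) : Prop :=
  exists C : R, 0 < C /\
    forall (n : nat) (x : 'I_n -> E) (f : 'I_n -> Y -> R),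
      (forall i, is_dual (f i) /\ positive_fun L (f i)) ->
      \sum_(i < n) `|f i (T (x i))|
        <= C * lpnorm q (fun i => `|x i|) * weak_norm (conj_exp p) f.

End Defs.

From mathcomp Require Import all_boot all_order all_algebra.
From mathcomp Require Import all_classical all_reals all_analysis.
From mathcomp Require Import lra.
Set Implicit Arguments. Unset Strict Implicit. Unset Printing Implicit Defensive.
Import Order.TTheory GRing.Theory Num.Theory.
Import numFieldNormedType.Exports.
Local Open Scope classical_set_scope.
Local Open Scope ring_scope.

(* For p > 1, ||(y_i)||_{l_p^pi(Y)} is a supremum of sums <f_i, |y_i|> over
   positive families (f_i) of |w|-norm at most 1, whereas positive strong
   summability bounds sums |<g_i, y_i>| over positive families of weak norm at
   most 1; each kind of sum controls the other.
   - Since |<g, y>| <= <g, |y|> and the |w|-norm of a positive family is at most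
     its weak norm, normalising (g_i) by its |w|-norm gives
     sum_i |<g_i, y_i>| <= ||(g_i)||_{p*,w} ||(y_i)||_{l_p^pi(Y)}.
   - Conversely |y| <= y^+ + (-y)^+, and Hahn-Banach applied to the sublinear
     functional u |-> <f, u^+> yields a positive g <= f with <g, y> = <f, y^+>.
     Doing this at y_i and at -y_i gives two positive families, of weak norm at
     most the |w|-norm of (f_i), with
     sum_i <f_i, |y_i|> <= sum_i |<g_i, y_i>| + sum_i |<h_i, y_i>|.
   For p = 1 both conditions reduce to the boundedness of T (then q = 1).
   Hahn-Banach itself follows from Zorn's lemma: a minimal sublinear functional
   below a given one is linear. *)

Section HahnBanach.
Context (R : realType) (V : lmodType R).
Implicit Types (q : V -> R) (u v y z : V).

Definition linear_functional (f : V -> R) :=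
  forall (a : R) u v, f (a *: u + v) = a * f u + f v.

Section LinearFunctional.
Variable f : V -> R.
Hypothesis hf : linear_functional f.

Lemma lfun0 : f 0 = 0.
Proof. by have := hf 1 0 0; rewrite scale1r addr0 mul1r; lra. Qed.

Lemma lfunD u v : f (u + v) = f u + f v.
Proof. by have := hf 1 u v; rewrite scale1r mul1r. Qed.

Lemma lfunZ (a : R) u : f (a *: u) = a * f u.
Proof. by have := hf a u 0; rewrite addr0 lfun0 addr0. Qed.

Lemma lfunN u : f (- u) = - f u.
Proof. by rewrite -scaleN1r lfunZ mulN1r. Qed.

Lemma lfunB u v : f (u - v) = f u - f v.
Proof. by rewrite lfunD lfunN. Qed.

End LinearFunctional.

Definition sublinear q :=
  (forall u v, q (u + v) <= q u + q v) /\
  (forall (a : R) u, 0 <= a -> q (a *: u) <= a * q u).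

Lemma sublinear0 q : sublinear q -> q 0 = 0.
Proof.
move=> [qD qZ]; apply/le_anti/andP; split.
  by have := qZ 0 0 (lexx _); rewrite scale0r mul0r.
by have := qD 0 0; rewrite addr0; lra.
Qed.

Lemma sublinear_oppr_le q u : sublinear q -> - q (- u) <= q u.
Proof. by move=> hq; have := hq.1 u (- u); rewrite subrr sublinear0 //; lra. Qed.

Lemma sublinearZ q (a : R) u : sublinear q -> 0 <= a -> q (a *: u) = a * q u.
Proof.
move=> hq; rewrite le_eqVlt => /orP[/eqP<-|a0].
  by rewrite scale0r mul0r sublinear0.
apply/le_anti/andP; split; first exact: hq.2 _ _ (ltW a0).
have ai : 0 < a^-1 by rewrite invr_gt0.
have := hq.2 _ (a *: u) (ltW ai); rewrite scalerA mulVf ?gt_eqF // scale1r => h.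
by rewrite -(ler_pM2l ai) mulrA mulVf ?gt_eqF // mul1r.
Qed.

Definition sublinear_shift q z u : R :=
  inf [set q (u + t *: z) - t * q z | t in [set t : R | 0 <= t]].

Section SublinearShift.
Variables (q : V -> R) (z : V).
Hypothesis hq : sublinear q.

Lemma sublinear_shift_lb u :
  has_lbound [set q (u + t *: z) - t * q z | t in [set t : R | 0 <= t]].
Proof.
exists (- q (- u)) => _ [t t0 <-].
have := hq.1 (u + t *: z) (- u); rewrite addrC addKr sublinearZ //; lra.
Qed.

Lemma sublinear_shift_le u t :
  0 <= t -> sublinear_shift q z u <= q (u + t *: z) - t * q z.
Proof. by move=> t0; apply: (ge_inf (sublinear_shift_lb u)); exists t. Qed.

Lemma le_sublinear_shift u x :
  (forall t, 0 <= t -> x <= q (u + t *: z) - t * q z) -> x <= sublinear_shift q z u.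
Proof.
move=> h; apply: lb_le_inf; first by exists (q (u + 0 *: z) - 0 * q z); exists 0 => /=.
by move=> _ [t t0 <-]; exact: h.
Qed.

Lemma sublinear_shift_le_self u : sublinear_shift q z u <= q u.
Proof.
by apply: le_trans (sublinear_shift_le u (lexx 0)) _; rewrite scale0r addr0 mul0r subr0.
Qed.

Lemma sublinear_shiftD u : sublinear_shift q z u + q z <= q (u + z).
Proof. by have := sublinear_shift_le u ler01; rewrite scale1r mul1r; lra. Qed.

Lemma sublinear_shift_sublinear : sublinear (sublinear_shift q z).
Proof.
split=> [u v|a u].
  have shiftD s t : 0 <= s -> 0 <= t -> sublinear_shift q z (u + v)
      <= (q (u + s *: z) - s * q z) + (q (v + t *: z) - t * q z).
    move=> s0 t0; apply: le_trans (sublinear_shift_le _ (addr_ge0 s0 t0)) _.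
    have := hq.1 (u + s *: z) (v + t *: z).
    by rewrite addrACA -scalerDl mulrDl; lra.
  rewrite -lerBlDr; apply: le_sublinear_shift => s s0.
  suff : sublinear_shift q z (u + v) - (q (u + s *: z) - s * q z)
      <= sublinear_shift q z v by lra.
  by apply: le_sublinear_shift => t t0; have := shiftD s t s0 t0; lra.
rewrite le_eqVlt => /orP[/eqP<-|a0].
  rewrite scale0r mul0r; apply: le_trans (sublinear_shift_le 0 (lexx 0)) _.
  by rewrite scale0r addr0 mul0r subr0 sublinear0.
rewrite mulrC -ler_pdivrMr //; apply: le_sublinear_shift => t t0.
rewrite ler_pdivrMr // mulrC.
apply: le_trans (sublinear_shift_le (a *: u) (mulr_ge0 (ltW a0) t0)) _.
rewrite -scalerA -scalerDr mulrBr mulrA lerD2r; exact: hq.2 _ _ (ltW a0).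
Qed.

End SublinearShift.

Definition minimal_sublinear q := sublinear q /\
  forall q', sublinear q' -> (forall u, q' u <= q u) -> forall u, q u <= q' u.

(* A minimal q coincides with its shift along z, and the shift satisfies
   [shift u + q z <= q (u + z)]; so q is additive. *)
Lemma minimal_sublinear_linear q : minimal_sublinear q -> linear_functional q.
Proof.
move=> [hq qmin].
have qD u v : q (u + v) = q u + q v.
  apply/le_anti/andP; split; first exact: hq.1.
  have := qmin _ (sublinear_shift_sublinear v hq) (sublinear_shift_le_self v hq) u.
  have := sublinear_shiftD v hq u; lra.
have qN u : q (- u) = - q u.
  by have := qD u (- u); rewrite subrr sublinear0 //; lra.
have qZ (a : R) u : q (a *: u) = a * q u.
  have [a0|a0] := leP 0 a; first exact: sublinearZ.
  have na0 : 0 <= - a by rewrite oppr_ge0 ltW.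
  by rewrite -[a]opprK scaleNr qN sublinearZ // mulNr !opprK.
by move=> a u v; rewrite qD qZ.
Qed.

Definition inf_fun (A : set (V -> R)) u := inf [set q u | q in A].

Lemma sublinear_inf_chain (q0 : V -> R) (A : set (V -> R)) : A !=set0 ->
  (forall q, A q -> sublinear q /\ forall u, q u <= q0 u) ->
  (forall q q', A q -> A q' -> (forall u, q u <= q' u) \/ (forall u, q' u <= q u)) ->
  sublinear (inf_fun A) /\ forall q, A q -> forall u, inf_fun A u <= q u.
Proof.
move=> [s0 As0] hA Achain.
have hlb u : has_lbound [set q u | q in A].
  exists (- q0 (- u)) => _ [q Aq <-]; have [hq hqq0] := hA q Aq.
  by apply: le_trans (sublinear_oppr_le u hq); rewrite lerN2.
have hle q u : A q -> inf_fun A u <= q u.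
  by move=> Aq; apply: (ge_inf (hlb u)); exists q.
have hge u x : (forall q, A q -> x <= q u) -> x <= inf_fun A u.
  move=> h; apply: lb_le_inf; first by exists (s0 u); exists s0.
  by move=> _ [q Aq <-]; exact: h.
split; last by move=> q Aq u; exact: hle.
split=> [u v|a u].
  rewrite -lerBlDr; apply: (hge u) => q Aq.
  suff : inf_fun A (u + v) - q u <= inf_fun A v by lra.
  apply: (hge v) => q' Aq'.
  have hq := (hA q Aq).1.1; have hq' := (hA q' Aq').1.1.
  have [h|h] := Achain q q' Aq Aq'.
    by have := hle q (u + v) Aq; have := hq u v; have := h v; lra.
  by have := hle q' (u + v) Aq'; have := hq' u v; have := h u; lra.
rewrite le_eqVlt => /orP[/eqP<-|a0].
  rewrite scale0r mul0r; apply: le_trans (hle s0 0 As0) _.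
  by rewrite sublinear0 //; exact: (hA s0 As0).1.
rewrite mulrC -ler_pdivrMr //; apply: (hge u) => q Aq.
rewrite ler_pdivrMr // mulrC; apply: le_trans (hle q (a *: u) Aq) _.
exact: (hA q Aq).1.2 _ _ (ltW a0).
Qed.

Lemma exists_minimal_sublinear q0 : sublinear q0 ->
  exists q, minimal_sublinear q /\ forall u, q u <= q0 u.
Proof.
move=> hq0.
pose T := {q | sublinear q /\ forall u, q u <= q0 u}.
pose t0 : T := exist _ q0 (conj hq0 (fun u => lexx _)).
pose ge (s t : T) : bool := `[< forall u, sval t u <= sval s u >].
have [|||m mmin] := @ZL_preorder T t0 ge.
- by move=> t; apply/asboolP => u.
- move=> r s t /asboolP h1 /asboolP h2; apply/asboolP => u.
  exact: le_trans (h2 u) (h1 u).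
- move=> A Achain.
  have [[s0 As0]|A0] := pselect (exists s, A s); last first.
    by exists t0 => s As; exfalso; apply: A0; exists s.
  have [|||hi hile] := @sublinear_inf_chain q0 [set sval s | s in A].
  + by exists (sval s0); exists s0.
  + by move=> _ [s _ <-]; exact: svalP s.
  + move=> _ _ [s As <-] [t At <-].
    by have [/asboolP h|/asboolP h] := Achain s t As At; [right|left].
  have hiq0 u : inf_fun [set sval s | s in A] u <= q0 u.
    exact: le_trans (hile _ (imageP sval As0) u) ((svalP s0).2 u).
  exists (exist _ (inf_fun [set sval s | s in A]) (conj hi hiq0)) => s As.
  by apply/asboolP => u /=; exact: hile (imageP sval As) u.
case: m mmin => q [hq hqq0] mmin; exists q; split=> //; split=> // q' hq' q'q.
pose t : T := exist _ q' (conj hq' (fun u => le_trans (q'q u) (hqq0 u))).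
by have /asboolP := mmin t (asboolT q'q).
Qed.

Theorem hahn_banach_sublinear (rho : V -> R) y : sublinear rho ->
  exists g, [/\ linear_functional g, forall u, g u <= rho u & g y = rho y].
Proof.
move=> hrho.
have [g [gmin gle]] := exists_minimal_sublinear (sublinear_shift_sublinear y hrho).
have glin := minimal_sublinear_linear gmin.
have grho u : g u <= rho u := le_trans (gle u) (sublinear_shift_le_self y hrho u).
exists g; split=> //; apply/le_anti/andP; split=> //.
(* [g] lies below the shift of [rho] along [y], which at [- y] is at most [- rho y]. *)
have := gle (- y); have := sublinear_shift_le y hrho (- y) ler01.
by rewrite scale1r mul1r addNr (sublinear0 hrho) (lfunN glin); lra.
Qed.

End HahnBanach.

Section BanachLatticeFacts.
Context (R : realType) (Y : completeNormedModType R) (L : BanachLattice Y).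
Local Notation le := (bl_le L).
Local Notation lab := (labs L).
Implicit Types (f : Y -> R) (x y z u v : Y).

Lemma bl_leD x y u v : le x y -> le u v -> le (x + u) (y + v).
Proof.
move=> xy uv; apply: bl_trans (bl_add u xy) _.
by rewrite !(addrC y); exact: bl_add.
Qed.

Lemma bl_leN x y : le x y -> le (- y) (- x).
Proof.
by move=> xy; have := bl_add (- x - y) xy; rewrite addrA subrr add0r addrCA subrr addr0.
Qed.

Lemma bl_subr_ge0 x y : le x y -> le 0 (y - x).
Proof. by move=> xy; have := bl_add (- x) xy; rewrite subrr. Qed.

Lemma bl_scale_ge0 (a : R) x : 0 <= a -> le 0 x -> le 0 (a *: x).
Proof. by move=> a0 x0; have := bl_scale a0 x0; rewrite scaler0. Qed.

Lemma labs_ge x : le x (lab x). Proof. exact: bl_join_ubl. Qed.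

Lemma labs_geN x : le (- x) (lab x). Proof. exact: bl_join_ubr. Qed.

Lemma labs_ge0 x : le 0 (lab x).
Proof.
have := bl_leD (labs_ge x) (labs_geN x); rewrite subrr.
have half0 : 0 <= 2^-1 :> R by rewrite invr_ge0.
move=> /(bl_scale_ge0 half0); rewrite scalerDr -scalerDl.
by rewrite (_ : 2^-1 + 2^-1 = 1 :> R) ?scale1r //; lra.
Qed.

Lemma labs_id x : le 0 x -> lab x = x.
Proof.
move=> x0; apply: bl_antisym; last exact: labs_ge.
apply: bl_join_least; first exact: bl_refl.
by have := bl_leN x0; rewrite oppr0 => /bl_trans; apply.
Qed.

Lemma norm_labs x : `|lab x| = `|x|.
Proof.
have labsK : bl_join L (lab x) (- lab x) = lab x := labs_id (labs_ge0 x).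
by apply/le_anti/andP; split; apply: (@bl_norm _ _ L); rewrite labsK; exact: bl_refl.
Qed.

Definition lpos x := bl_join L x 0.

Lemma lpos_ge x : le x (lpos x). Proof. exact: bl_join_ubl. Qed.

Lemma lpos_ge0 x : le 0 (lpos x). Proof. exact: bl_join_ubr. Qed.

Lemma lpos_id x : le 0 x -> lpos x = x.
Proof.
move=> x0; apply: bl_antisym; last exact: lpos_ge.
by apply: bl_join_least => //; exact: bl_refl.
Qed.

Lemma lposN_eq0 x : le 0 x -> lpos (- x) = 0.
Proof.
move=> x0; apply: bl_antisym; last exact: lpos_ge0.
by apply: bl_join_least; [have := bl_leN x0; rewrite oppr0 | exact: bl_refl].
Qed.

Lemma norm_lpos_le x : `|lpos x| <= `|x|.
Proof.
have lposK : bl_join L (lpos x) (- lpos x) = lpos x := labs_id (lpos_ge0 x).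
apply: (@bl_norm _ _ L); rewrite lposK.
by apply: bl_join_least; [exact: labs_ge | exact: labs_ge0].
Qed.

Lemma labs_le_lposD x : le (lab x) (lpos x + lpos (- x)).
Proof.
apply: bl_join_least.
  by have := bl_leD (lpos_ge x) (lpos_ge0 (- x)); rewrite addr0.
by have := bl_leD (lpos_ge0 x) (lpos_ge (- x)); rewrite add0r.
Qed.

Lemma lposD_le u v : le (lpos (u + v)) (lpos u + lpos v).
Proof.
apply: bl_join_least; first exact: bl_leD (lpos_ge u) (lpos_ge v).
by have := bl_leD (lpos_ge0 u) (lpos_ge0 v); rewrite addr0.
Qed.

Lemma lposZ_le (a : R) u : 0 <= a -> le (lpos (a *: u)) (a *: lpos u).
Proof.
move=> a0; apply: bl_join_least; first exact: bl_scale a0 (lpos_ge u).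
exact: bl_scale_ge0 a0 (lpos_ge0 u).
Qed.

Section PositiveFunctional.
Variable f : Y -> R.
Hypotheses (hf : linear_functional f) (fpos : positive_fun L f).

Lemma positive_fun_le x y : le x y -> f x <= f y.
Proof. by move=> xy; have := fpos (bl_subr_ge0 xy); rewrite lfunB //; lra. Qed.

Lemma positive_fun_abs_le y : `|f y| <= f (lab y).
Proof.
rewrite ler_norml; apply/andP; split; last exact/positive_fun_le/labs_ge.
by rewrite lerNl -lfunN //; exact/positive_fun_le/labs_geN.
Qed.

Lemma positive_fun_labs_le y : f (lab y) <= f (lpos y) + f (lpos (- y)).
Proof. by rewrite -lfunD //; apply: positive_fun_le; exact: labs_le_lposD. Qed.

Lemma sublinear_positive_fun_lpos : sublinear (fun u => f (lpos u)).
Proof.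
split=> [u v|a u a0]; rewrite -?lfunD -?lfunZ //; apply: positive_fun_le.
  exact: lposD_le.
exact: lposZ_le.
Qed.

Lemma dual_abs_pos z : le 0 z -> dual_abs L f z = f z.
Proof.
move=> z0; have fz0 := fpos z0.
have bound : ubound [set `|f w| | w in [set w | le (lab w) z]] (f z).
  move=> _ [w /= wz <-]; apply: le_trans (positive_fun_abs_le w) _.
  exact: positive_fun_le.
have zin : [set `|f w| | w in [set w | le (lab w) z]] `|f z|.
  by exists z => //=; rewrite labs_id //; exact: bl_refl.
apply/le_anti/andP; split; first by apply: ge_sup => //; exists `|f z|.
by rewrite -[X in X <= _]ger0_norm //; apply: ub_le_sup => //; exists (f z).
Qed.

End PositiveFunctional.

Lemma dual_lfun f : is_dual f -> linear_functional f.
Proof. by case. Qed.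

Lemma dual_bound f : is_dual f -> exists2 M, 0 <= M & forall x, `|f x| <= M * `|x|.
Proof.
case=> _ [M hM]; exists `|M| => // x.
by apply: le_trans (hM x) _; apply: ler_wpM2r => //; exact: ler_norm.
Qed.

Lemma positive_dual_lpos f y : is_dual f -> positive_fun L f ->
  exists g, [/\ is_dual g, positive_fun L g, forall z, le 0 z -> g z <= f z
              & f (lpos y) <= g y].
Proof.
move=> fd fpos; have hf := dual_lfun fd; have [M M0 hM] := dual_bound fd.
have [g [hg gle gy]] := hahn_banach_sublinear y (sublinear_positive_fun_lpos hf fpos).
have gub x : g x <= M * `|x|.
  apply: le_trans (gle x) _; apply: le_trans (ler_norm _) _.
  by apply: le_trans (hM _) _; apply: ler_wpM2l => //; exact: norm_lpos_le.
exists g; split; last by rewrite gy.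
- split=> //; exists M => x; rewrite ler_norml gub andbT.
  by have := gub (- x); rewrite lfunN // normrN; lra.
- by move=> z z0; have := gle (- z); rewrite lposN_eq0 // lfun0 // lfunN //; lra.
- by move=> z z0; have := gle z; rewrite lpos_id.
Qed.

End BanachLatticeFacts.

Section FiniteLpNorms.
Context (R : realType).
Implicit Types (r : \bar R) (s : R).

Lemma exponent_cases r : (1 <= r)%E -> r = +oo%E \/ exists2 s, r = s%:E & 1 <= s.
Proof.
case: r => [s||] r1; last by move: r1; rewrite leeNy_eq.
  by right; exists s; rewrite // -lee_fin.
by left.
Qed.

Lemma lpnorm_ge0 r n (a : 'I_n -> R) : (1 <= r)%E -> 0 <= lpnorm r a.
Proof.
move=> /exponent_cases [->|[s -> _]] /=; last exact: powR_ge0.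
by apply: (big_ind (fun x => 0 <= x)) => // x y x0 y0; rewrite le_max x0.
Qed.

Lemma lpnorm_le r n (a b : 'I_n -> R) : (1 <= r)%E ->
  (forall i, `|a i| <= `|b i|) -> lpnorm r a <= lpnorm r b.
Proof.
move=> /exponent_cases [->|[s -> s1]] ab /=.
  apply: (big_ind2 (fun x y => x <= y)) => // x1 x2 y1 y2 h1 h2.
  by rewrite ge_max !le_max h1 h2 orbT.
have sumr_pow_ge0 (c : 'I_n -> R) : 0 <= \sum_i `|c i| `^ s.
  by apply: sumr_ge0 => i _; exact: powR_ge0.
apply: ge0_ler_powR; rewrite ?nnegrE ?invr_ge0 ?sumr_pow_ge0 //; first lra.
by apply: ler_sum => i _; apply: ge0_ler_powR => //; lra.
Qed.

Lemma lpnorm_ge_abs r n (a : 'I_n -> R) j : (1 <= r)%E -> `|a j| <= lpnorm r a.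
Proof.
move=> /exponent_cases [->|[s -> s1]] /=; first by rewrite (bigD1 j) //= le_max lexx.
have s0 : s != 0 by rewrite gt_eqF //; lra.
rewrite -{1}(powRr1 (normr_ge0 (a j))) -(mulfV s0) powRrM.
have sumr_pow_ge0 : 0 <= \sum_i `|a i| `^ s by apply: sumr_ge0 => i _; exact: powR_ge0.
apply: ge0_ler_powR; rewrite ?nnegrE ?invr_ge0 ?powR_ge0 ?sumr_pow_ge0 //; first lra.
by rewrite (bigD1 j) //= lerDl sumr_ge0 // => i _; exact: powR_ge0.
Qed.

Lemma lpnormZ r n (a : 'I_n -> R) c : (1 <= r)%E -> 0 <= c ->
  lpnorm r (fun i => c * a i) = c * lpnorm r a.
Proof.
move=> /exponent_cases [->|[s -> s1]] c0 /=.
  apply: (big_ind2 (fun x y => x = c * y)); first by rewrite mulr0.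
    by move=> x1 x2 y1 y2 -> ->; rewrite maxr_pMr.
  by move=> i _; rewrite normrM ger0_norm.
under eq_bigr => i _ do rewrite normrM (ger0_norm c0) powRM //.
have s0 : s != 0 by rewrite gt_eqF //; lra.
have sumr_pow_ge0 : 0 <= \sum_i `|a i| `^ s by apply: sumr_ge0 => i _; exact: powR_ge0.
by rewrite -mulr_sumr powRM ?powR_ge0 // -powRrM mulfV // powRr1.
Qed.

Lemma lpnorm1 n (a : 'I_n -> R) : lpnorm 1%E a = \sum_i `|a i|.
Proof.
rewrite /= invr1 powRr1; last by apply: sumr_ge0 => i _; exact: powR_ge0.
by apply: eq_bigr => i _; rewrite powRr1.
Qed.

Lemma conj_exp_ge1 (p : \bar R) : (1 <= p)%E -> (1 <= conj_exp p)%E.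
Proof.
move=> /exponent_cases [->|[s -> s1]] //=.
case: eqP => [_|/eqP s1']; first by rewrite leey.
rewrite lee_fin ler_pdivlMr; last by rewrite subr_gt0 lt_neqAle eq_sym s1' s1.
lra.
Qed.

Lemma sup_lpnorm_ub (T : Type) r n (F : 'I_n -> T -> R) (D : set T) (B : R) t :
  (1 <= r)%E -> (forall t j, D t -> `|F j t| <= B) -> D t ->
  lpnorm r (fun j => F j t) <= sup [set lpnorm r (fun j => F j t) | t in D].
Proof.
move=> r1 FB Dt; apply: ub_le_sup; last by exists t.
exists (lpnorm r (fun _ : 'I_n => B)) => _ [t' Dt' <-].
by apply: lpnorm_le => // j; apply: le_trans (FB _ _ Dt') (ler_norm B).
Qed.

Lemma sup_lpnorm_le (T : Type) r n (F : 'I_n -> T -> R) (D : set T) (K : R) :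
  D !=set0 -> (forall t, D t -> lpnorm r (fun j => F j t) <= K) ->
  sup [set lpnorm r (fun j => F j t) | t in D] <= K.
Proof.
move=> [t0 Dt0] FK; apply: ge_sup; first by exists (lpnorm r (fun j => F j t0)), t0.
by move=> _ [t Dt <-]; exact: FK.
Qed.

End FiniteLpNorms.

Section WeakNorms.
Context (R : realType) (Y : completeNormedModType R) (L : BanachLattice Y).
Local Notation le := (bl_le L).
Local Notation lab := (labs L).
Implicit Types (r : \bar R) (y z : Y).

Definition pos_dual_family n (f : 'I_n -> Y -> R) :=
  forall i, is_dual (f i) /\ positive_fun L (f i).

Lemma norm_normalize y : y != 0 -> `| `|y|^-1 *: y| = 1.
Proof. by move=> y0; rewrite normrZ ger0_norm ?invr_ge0 // mulVf // normr_eq0. Qed.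

Lemma lfun_abs_le_norm (f : Y -> R) (P : Y -> Prop) (K : R) z :
  linear_functional f -> (forall (c : R) y, 0 <= c -> P y -> P (c *: y)) ->
  (forall y, `|y| = 1 -> P y -> `|f y| <= K) -> P z -> `|f z| <= K * `|z|.
Proof.
move=> hf Pcone fK Pz; have [->|z0] := eqVneq z 0.
  by rewrite lfun0 // !normr0 mulr0.
have zK : z = `|z| *: (`|z|^-1 *: z) by rewrite scalerA mulfV ?scale1r ?normr_eq0.
rewrite [in X in X <= _]zK lfunZ // normrM normr_id mulrC.
apply: ler_wpM2r => //; apply: fK; first exact: norm_normalize.
by apply: Pcone; rewrite ?invr_ge0.
Qed.

Lemma dual_family_bounded n (f : 'I_n -> Y -> R) : (forall i, is_dual (f i)) ->
  exists B, forall y i, `|y| <= 1 -> `|f i y| <= B.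
Proof.
move=> fd.
have /choice [M hM] : forall i, exists M, 0 <= M /\ forall x, `|f i x| <= M * `|x|.
  by move=> i; have [M M0 hM] := dual_bound (fd i); exists M.
exists (\sum_i M i) => y i y1; apply: le_trans ((hM i).2 y) _.
apply: le_trans (ler_wpM2l (hM i).1 y1) _; rewrite mulr1.
by rewrite (bigD1 i) //= lerDl sumr_ge0 // => j _; exact: (hM j).1.
Qed.

Section WeakNorm.
Variables (r : \bar R) (n : nat) (f : 'I_n -> Y -> R).
Hypothesis r1 : (1 <= r)%E.

Lemma weak_norm_ub y : (forall i, is_dual (f i)) -> `|y| <= 1 ->
  lpnorm r (fun j => f j y) <= weak_norm r f.
Proof.
move=> fd y1; have [B fB] := dual_family_bounded fd.
by apply: (@sup_lpnorm_ub _ _ r n f [set y | `|y| <= 1] B y r1) => // t j; exact: fB.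
Qed.

Lemma weak_norm_le K : (forall y, `|y| <= 1 -> lpnorm r (fun j => f j y) <= K) ->
  weak_norm r f <= K.
Proof. by apply: sup_lpnorm_le; exists 0; rewrite /= normr0. Qed.

Lemma weak_norm_ge0 : (forall i, is_dual (f i)) -> 0 <= weak_norm r f.
Proof.
move=> fd; apply: le_trans (lpnorm_ge0 (fun j => f j 0) r1) (weak_norm_ub fd _).
by rewrite normr0.
Qed.

Lemma weak_norm_abs_le i y : (forall i, is_dual (f i)) ->
  `|f i y| <= weak_norm r f * `|y|.
Proof.
move=> fd; apply: (@lfun_abs_le_norm _ (fun _ => True)) => // [|u u1 _].
  exact: dual_lfun (fd i).
apply: le_trans (lpnorm_ge_abs (fun j => f j u) i r1) _.
by apply: weak_norm_ub; rewrite ?u1.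
Qed.

Hypothesis hf : pos_dual_family f.

Lemma dual_abs_family z : le 0 z ->
  (fun j => dual_abs L (f j) z) = (fun j => f j z).
Proof.
move=> z0; apply: funext => j.
exact: (dual_abs_pos (dual_lfun (hf j).1) (hf j).2 z0).
Qed.

Lemma absweak_norm_ub y : `|y| <= 1 -> le 0 y ->
  lpnorm r (fun j => f j y) <= absweak_norm L r f.
Proof.
move=> y1 y0; have [B fB] := dual_family_bounded (fun i => (hf i).1).
rewrite -(dual_abs_family y0).
apply: (@sup_lpnorm_ub _ _ r n (fun j => dual_abs L (f j))
          [set y | `|y| <= 1 /\ le 0 y] B y r1) => // t j [t1 t0].
by rewrite (dual_abs_pos (dual_lfun (hf j).1) (hf j).2 t0); exact: fB.
Qed.

Lemma absweak_norm_le K : (forall y, `|y| <= 1 -> le 0 y ->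
  lpnorm r (fun j => f j y) <= K) -> absweak_norm L r f <= K.
Proof.
move=> fK; apply: sup_lpnorm_le.
  by exists 0; split; [rewrite normr0 | exact: bl_refl].
by move=> y [y1 y0]; rewrite dual_abs_family //; exact: fK.
Qed.

Lemma absweak_norm_ge0 : 0 <= absweak_norm L r f.
Proof.
apply: le_trans (lpnorm_ge0 (fun j => f j 0) r1) (absweak_norm_ub _ (bl_refl _ _)).
by rewrite normr0.
Qed.

Lemma absweak_norm_abs_le i z : le 0 z -> `|f i z| <= absweak_norm L r f * `|z|.
Proof.
apply: (@lfun_abs_le_norm _ (bl_le L 0)) => [|c u|u u1 u0].
- exact: dual_lfun (hf i).1.
- exact: bl_scale_ge0.
apply: le_trans (lpnorm_ge_abs (fun j => f j u) i r1) _.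
by apply: absweak_norm_ub; rewrite ?u1.
Qed.

Lemma absweak_norm_le_weak : absweak_norm L r f <= weak_norm r f.
Proof.
apply: absweak_norm_le => y y1 _; apply: weak_norm_ub => // i; exact: (hf i).1.
Qed.

End WeakNorm.

Lemma weak_norm_le_absweak r n (f g : 'I_n -> Y -> R) : (1 <= r)%E ->
  pos_dual_family f -> pos_dual_family g ->
  (forall i z, le 0 z -> g i z <= f i z) -> weak_norm r g <= absweak_norm L r f.
Proof.
move=> r1 hf hg gf; apply: weak_norm_le => y y1.
have labs_y1 : `|lab y| <= 1 by rewrite norm_labs.
apply: le_trans (absweak_norm_ub r1 hf labs_y1 (labs_ge0 L y)); apply: lpnorm_le => // j.
apply: le_trans (positive_fun_abs_le (dual_lfun (hg j).1) (hg j).2 y) _.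
rewrite ger0_norm; last exact: (hf j).2 _ (labs_ge0 L y).
exact: gf (labs_ge0 L y).
Qed.

Lemma lpi_norm1 n (y : 'I_n -> Y) : lpi_norm L 1 y = \sum_i `|y i|.
Proof. by rewrite /lpi_norm eqxx. Qed.

Section LpiNorm.
Variables (p : \bar R) (n : nat) (y : 'I_n -> Y).
Hypotheses (p1 : (1 <= p)%E) (pn1 : p != 1%E).

Definition lpi_sums := [set \sum_i f i (lab (y i)) | f in
  [set f : 'I_n -> Y -> R | pos_dual_family f /\ absweak_norm L (conj_exp p) f <= 1]].

Lemma lpi_normE : lpi_norm L p y = sup lpi_sums.
Proof. by rewrite /lpi_norm (negbTE pn1). Qed.

Lemma lpi_norm_ub f : pos_dual_family f -> absweak_norm L (conj_exp p) f <= 1 ->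
  \sum_i f i (lab (y i)) <= lpi_norm L p y.
Proof.
move=> hf f1; rewrite lpi_normE; apply: ub_le_sup; last by exists f.
exists (\sum_i `|y i|) => _ [g [hg g1] <-]; apply: ler_sum => i _.
apply: le_trans (ler_norm _) _.
apply: le_trans (absweak_norm_abs_le (conj_exp_ge1 p1) hg i (labs_ge0 L (y i))) _.
by rewrite norm_labs; apply: ler_piMl.
Qed.

Lemma lpi_norm_ge0 : 0 <= lpi_norm L p y.
Proof.
have [[f [hf f1]]|none] := pselect (exists f : 'I_n -> Y -> R,
    pos_dual_family f /\ absweak_norm L (conj_exp p) f <= 1).
  apply: le_trans (lpi_norm_ub hf f1); apply: sumr_ge0 => i _.
  exact: (hf i).2 _ (labs_ge0 L (y i)).
rewrite lpi_normE; suff -> : lpi_sums = set0 by rewrite sup0.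
by apply/seteqP; split=> // v [f hf _]; apply: none; exists f.
Qed.

Lemma sum_labs_le_absweak_lpi f : pos_dual_family f ->
  \sum_i f i (lab (y i)) <= absweak_norm L (conj_exp p) f * lpi_norm L p y.
Proof.
move=> hf; have r1 := conj_exp_ge1 p1.
set a := absweak_norm L (conj_exp p) f.
have [a0|a_neq0] := eqVneq a 0.
  rewrite a0 mul0r; apply: sumr_le0 => i _.
  apply: le_trans (ler_norm _) _.
  apply: le_trans (absweak_norm_abs_le r1 hf i (labs_ge0 L (y i))) _.
  by rewrite -/a a0 mul0r.
have a_gt0 : 0 < a by rewrite lt_def a_neq0 absweak_norm_ge0.
have ai0 : 0 <= a^-1 by rewrite invr_ge0 ltW.
pose g i u := a^-1 * f i u.
have hg : pos_dual_family g.
  move=> i; have [[hl [M hM]] fpos] := hf i; split; last first.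
    by move=> u u0; rewrite /g mulr_ge0 ?fpos.
  split; first by move=> c u v; rewrite /g hl mulrDr mulrCA.
  exists (a^-1 * M) => u; rewrite /g normrM ger0_norm // -mulrA.
  by rewrite ler_pM2l ?invr_gt0.
have g1 : absweak_norm L (conj_exp p) g <= 1.
  apply: absweak_norm_le => // u u1 u0.
  rewrite lpnormZ // ler_pdivrMl // mulr1.
  exact: absweak_norm_ub.
have gf : \sum_i f i (lab (y i)) = a * \sum_i g i (lab (y i)).
  by rewrite mulr_sumr; apply: eq_bigr => i _; rewrite mulrA mulfV ?mul1r.
by rewrite gf ler_pM2l //; exact: lpi_norm_ub.
Qed.

Lemma lpi_norm_le_twice K : 0 <= K ->
  (forall g, pos_dual_family g -> weak_norm (conj_exp p) g <= 1 ->
     \sum_i `|g i (y i)| <= K) ->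
  lpi_norm L p y <= K + K.
Proof.
move=> K0 HK; rewrite lpi_normE.
have [->|/set0P Sne] := eqVneq lpi_sums set0; first by rewrite sup0 addr_ge0.
apply: ge_sup => // _ [f [hf f1] <-].
have lpos_dom (v : 'I_n -> Y) : exists g : 'I_n -> Y -> R, pos_dual_family g /\
    forall i, (forall z, le 0 z -> g i z <= f i z) /\ f i (lpos L (v i)) <= g i (v i).
  have /choice [g hg] := fun i => positive_dual_lpos (v i) (hf i).1 (hf i).2.
  by exists g; split=> i; case: (hg i).
have [g [hg gf]] := lpos_dom y.
have [h [hh hf']] := lpos_dom (fun i => - y i).
have weak1 (k : 'I_n -> Y -> R) : pos_dual_family k ->
    (forall i z, le 0 z -> k i z <= f i z) -> weak_norm (conj_exp p) k <= 1.
  move=> hk kf; apply: le_trans f1.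
  exact: weak_norm_le_absweak (conj_exp_ge1 p1) hf hk kf.
apply: (le_trans _ (lerD (HK g hg (weak1 g hg (fun i => (gf i).1)))
                          (HK h hh (weak1 h hh (fun i => (hf' i).1))))).
rewrite -big_split; apply: ler_sum => i _ /=.
apply: le_trans (positive_fun_labs_le (dual_lfun (hf i).1) (hf i).2 (y i)) _.
have hN : h i (- y i) = - h i (y i) by rewrite lfunN //; exact: dual_lfun (hh i).1.
have := (gf i).2; have := (hf' i).2; rewrite hN.
have := ler_norm (g i (y i)); have := ler_norm (- h i (y i)); rewrite normrN; lra.
Qed.

End LpiNorm.

Lemma sum_abs_le_weak_lpi p n (y : 'I_n -> Y) f : (1 <= p)%E -> pos_dual_family f ->
  \sum_i `|f i (y i)| <= weak_norm (conj_exp p) f * lpi_norm L p y.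
Proof.
move=> p1 hf; have r1 := conj_exp_ge1 p1.
have fd i : is_dual (f i) := (hf i).1.
have [p_eq1|pn1] := eqVneq p 1%E.
  rewrite [in lpi_norm _ p _]p_eq1 lpi_norm1 mulr_sumr.
  by apply: ler_sum => i _; exact: weak_norm_abs_le.
apply: (@le_trans _ _ (\sum_i f i (lab (y i)))).
  by apply: ler_sum => i _; exact: positive_fun_abs_le (dual_lfun (fd i)) (hf i).2 _.
apply: le_trans (sum_labs_le_absweak_lpi y p1 pn1 hf) _.
by apply: ler_wpM2r; [exact: lpi_norm_ge0 y p1 pn1 | exact: absweak_norm_le_weak].
Qed.

End WeakNorms.

Lemma bounded_op_bound (R : realType) (E Y : normedModType R) (T : E -> Y) :
  is_bounded_op T -> exists2 M, 0 < M & forall x, `|T x| <= M * `|x|.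
Proof.
case=> _ [M hM]; exists (`|M| + 1); first by rewrite ltr_pwDr.
move=> x; apply: le_trans (hM x) _; apply: ler_wpM2r => //.
by apply: le_trans (ler_norm M) _; rewrite lerDl.
Qed.

Unset Implicit Arguments. Set Strict Implicit.

Theorem lemma3p1 (R : realType) (E : completeNormedModType R)
  (Y : completeNormedModType R) (L : BanachLattice Y) (p q : \bar R)
  (hq1 : (1 <= q)%E) (hqp : (q <= p)%E) (T : E -> Y)
  (hT : is_bounded_op T) :
  pos_strongly_summing L p q T <->
  exists C : R, 0 < C /\
    forall (n : nat) (x : 'I_n -> E),
      lpi_norm L p (fun i => T (x i)) <= C * lpnorm q (fun i => `|x i|).
Proof.
have p1 : (1 <= p)%E := le_trans hq1 hqp.
have Cx_ge0 C n (x : 'I_n -> E) : 0 < C -> 0 <= C * lpnorm q (fun i => `|x i|).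
  by move=> C0; rewrite mulr_ge0 ?lpnorm_ge0 // ltW.
split=> -[C [C0 HC]]; last first.
  exists C; split=> // n x f hf.
  apply: le_trans (sum_abs_le_weak_lpi _ p1 hf) _.
  rewrite [X in _ <= X]mulrC; apply: ler_wpM2l (HC n x).
  exact: weak_norm_ge0 (conj_exp_ge1 p1) (fun i => (hf i).1).
have [p_eq1|pn1] := eqVneq p 1%E.
  have q_eq1 : q = 1%E by apply/le_anti; rewrite hq1 -p_eq1 hqp.
  have [M M0 hM] := bounded_op_bound hT.
  exists M; split=> // n x; rewrite p_eq1 q_eq1 lpi_norm1 lpnorm1 mulr_sumr.
  by apply: ler_sum => i _; rewrite normr_id; exact: hM.
exists (C + C); split=> [|n x]; first by rewrite addr_gt0.
rewrite mulrDl; apply: lpi_norm_le_twice => // [|g hg g1]; first exact: Cx_ge0.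
apply: le_trans (HC n x g hg) _; rewrite -[X in _ <= X]mulr1.
exact: ler_wpM2l (Cx_ge0 _ _ x C0) _ _ g1.
Qed.
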